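(* There exist absolute constants $c>0$ and $C>0$ such that the following holds. Let $n\ge2$ be an integer and $L,B,\varepsilon>0$ with $\varepsilon\le LB^2/4$. Then for every PIFO algorithm $\mathcal{A}$ there exist a dimension $d\le C\big(1+B\sqrt{L/(n\varepsilon)}\big)$ and $n$ functions $f_1,\dots,f_n:\mathbb{R}^d\to\mathbb{R}$, each $L$-smooth and convex, such that $f=\frac1n\sum_i f_i$ has a minimizer $x^*$ with $\|x_0-x^*\|_2\le B$ ($x_0$ the initial point of $\mathcal{A}$), and the iterates of $\mathcal{A}$ run on $f_1,\dots,f_n$ satisfy $\mathbb{E} f(x_t)-f(x^* )\ge\varepsilon$ for all integers $0\le t\le c\big(n+B\sqrt{nL/\varepsilon}\big)$. That is, $\mathcal{A}$ needs $\Omega(n+B\sqrt{nL/\varepsilon})$ oracle queries to find $\hat x$ with $\mathbb{E} f(\hat x)-f(x^* )<\varepsilon$.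
   Context: A differentiable $g:\mathbb{R}^d\to\mathbb{R}$ is $L$-smooth if $\|\nabla g(x)-\nabla g(y)\|_2\le L\|x-y\|_2$ for all $x,y$. For $\gamma>0$, $\mathrm{prox}^{\gamma}_g(x)=\arg\min_u\{g(u)+\frac{1}{2\gamma}\|x-u\|_2^2\}$. PIFO algorithm: given $f_1,\dots,f_n:\mathbb{R}^d\to\mathbb{R}$ and $f=\frac1n\sum_i f_i$, a PIFO algorithm $\mathcal{A}$ is specified by a probability vector $(p_1,\dots,p_n)$ ($p_j\ge0$, $\sum_j p_j=1$), an initial point $x_0$ and parameters $\gamma_t>0$; it draws indices $i_1,i_2,\dots$ independently with $\mathbb{P}(i_t=j)=p_j$, at step $t\ge1$ queries the oracle $h_f(x_{t-1},i_t,\gamma_t)=[f_{i_t}(x_{t-1}),\nabla f_{i_t}(x_{t-1}),\mathrm{prox}^{\gamma_t}_{f_{i_t}}(x_{t-1})]$, and outputs an iterate $x_t\in\mathrm{span}\{x_0,\dots,x_{t-1},\nabla f_{i_1}(x_0),\dots,\nabla f_{i_t}(x_{t-1}),\mathrm{prox}^{\gamma_1}_{f_{i_1}}(x_0),\dots,\mathrm{prox}^{\gamma_t}_{f_{i_t}}(x_{t-1})\}$ (the choice within the span may depend on all previously observed information). Iterate $x_t$ uses $t$ oracle queries. *)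

From Stdlib Require Import Reals Lra Lia List Arith.
Import ListNotations.
Open Scope R_scope.

Definition idx (m : nat) := {i : nat | (i < m)%nat}.

Fixpoint sumR (m : nat) (f : nat -> R) : R :=
  match m with
  | O => 0
  | S k => sumR k f + f k
  end.

Definition sum_idx (m : nat) (h : idx m -> R) : R :=
  sumR m (fun k => match lt_dec k m with
                   | left H => h (exist _ k H)
                   | right _ => 0
                   end).

Definition vec (d : nat) := idx d -> R.
Definition vzero {d} : vec d := fun _ => 0.
Definition vadd {d} (x y : vec d) : vec d := fun i => x i + y i.
Definition vsub {d} (x y : vec d) : vec d := fun i => x i - y i.
Definition vscale {d} (a : R) (x : vec d) : vec d := fun i => a * x i.
Definition inner {d} (x y : vec d) : R := sum_idx d (fun i => x i * y i).
Definition norm2 {d} (x : vec d) : R := sqrt (inner x x).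

Definition has_gradient {d} (g : vec d -> R) (G : vec d -> vec d) : Prop :=
  forall x eps, 0 < eps -> exists del, 0 < del /\
    forall h : vec d, 0 < norm2 h < del ->
      Rabs (g (vadd x h) - g x - inner (G x) h) <= eps * norm2 h.

Definition L_smooth {d} (L : R) (g : vec d -> R) (G : vec d -> vec d) : Prop :=
  has_gradient g G /\
  forall x y, norm2 (vsub (G x) (G y)) <= L * norm2 (vsub x y).

Definition convex {d} (g : vec d -> R) : Prop :=
  forall x y (lam : R), 0 <= lam <= 1 ->
    g (vadd (vscale lam x) (vscale (1 - lam) y)) <= lam * g x + (1 - lam) * g y.

Definition is_prox {d} (g : vec d -> R) (gamma : R) (x u : vec d) : Prop :=
  forall v, g u + (norm2 (vsub x u))^2 / (2 * gamma)
            <= g v + (norm2 (vsub x v))^2 / (2 * gamma).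

Definition in_span {d} (l : list (vec d)) (v : vec d) : Prop :=
  exists c : nat -> R, forall j,
    v j = sumR (length l) (fun k => c k * nth k l vzero j).

(* One oracle observation: (index i_t, f_{i_t}(x_{t-1}), grad, prox). *)
Record obs (n d : nat) := mkObs {
  o_idx : idx n; o_val : R; o_grad : vec d; o_prox : vec d }.
Arguments o_idx {n d}. Arguments o_val {n d}.
Arguments o_grad {n d}. Arguments o_prox {n d}.

(* A PIFO algorithm in dimension d for n functions. Histories are lists of
   observations, NEWEST FIRST; [next h] is the iterate x_t output after the
   t = length h observations in h. *)
Record pifo (n d : nat) := mkPifo {
  prob : idx n -> R;
  x_init : vec d;
  gam : nat -> R;             (* gamma_t, t >= 1 *)
  next : list (obs n d) -> vec d }.
Arguments prob {n d}. Arguments x_init {n d}.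
Arguments gam {n d}. Arguments next {n d}.

Definition cur {n d} (A : pifo n d) (h : list (obs n d)) : vec d :=
  match h with [] => x_init A | _ => next A h end.

Fixpoint prev_points {n d} (A : pifo n d) (h : list (obs n d)) : list (vec d) :=
  match h with
  | [] => []
  | _ :: h' => cur A h' :: prev_points A h'
  end.

Definition valid_pifo {n d} (A : pifo n d) : Prop :=
  (forall j, 0 <= prob A j) /\
  sum_idx n (prob A) = 1 /\
  (forall t, (1 <= t)%nat -> 0 < gam A t) /\
  (forall h : list (obs n d), h <> [] ->
     in_span (prev_points A h ++ map o_grad h ++ map o_prox h) (next A h)).

Fixpoint history {n d} (A : pifo n d)
    (f : idx n -> vec d -> R) (G : idx n -> vec d -> vec d)
    (P : idx n -> R -> vec d -> vec d) (s : list (idx n)) : list (obs n d) :=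
  match s with
  | [] => []
  | i :: s' =>
      let h := history A f G P s' in
      let x := cur A h in
      mkObs n d i (f i x) (G i x) (P i (gam A (S (length s'))) x) :: h
  end.

(* Expectation of g(i_t, ..., i_1) when the i_k are i.i.d. with law p. *)
Fixpoint expect {n} (p : idx n -> R) (t : nat) (g : list (idx n) -> R) : R :=
  match t with
  | O => g []
  | S t' => expect p t' (fun s => sum_idx n (fun j => p j * g (j :: s)))
  end.

Definition favg {n d} (f : idx n -> vec d -> R) (x : vec d) : R :=
  sum_idx n (fun i => f i x) / INR n.

From Stdlib Require Import Reals List Lra Lia ZArith
  FunctionalExtensionality ProofIrrelevance Classical.
Import ListNotations.
Open Scope R_scope.

(* Every component is a convex quadratic read in coordinates rotated by a Householder
   reflection sending the initial point x0 to |x0| e_0. Two components, with indices k1, k2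
   of total sampling probability at most 3/n, carry the two halves of Nesterov's chain
   L/4 [(b - z_1)^2 + sum_j (z_j - z_(j+1))^2]; the other n - 2 carry no information. Since
   iterates stay in the span of the oracle answers, a query to k1 or k2 reveals at most one
   new coordinate and any other query none (zero-chain property); after t steps at most
   3t/n coordinates are revealed on average, while points with few revealed coordinates are
   far from optimal. For short horizons a two-dimensional instance gives the Omega(n) term. *)

Lemma sumR_ext m f g : (forall k, (k < m)%nat -> f k = g k) -> sumR m f = sumR m g.
Proof. induction m; simpl; intros H; auto. rewrite IHm, H by (auto; lia); auto. Qed.

Lemma sumR_add m f g : sumR m (fun k => f k + g k) = sumR m f + sumR m g.
Proof. induction m; simpl; [ring|]. rewrite IHm; ring. Qed.

Lemma sumR_sub m f g : sumR m (fun k => f k - g k) = sumR m f - sumR m g.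
Proof. induction m; simpl; [ring|]. rewrite IHm; ring. Qed.

Lemma sumR_scal m a f : sumR m (fun k => a * f k) = a * sumR m f.
Proof. induction m; simpl; [ring|]. rewrite IHm; ring. Qed.

Lemma sumR_scalr m a f : sumR m (fun k => f k * a) = sumR m f * a.
Proof. induction m; simpl; [ring|]. rewrite IHm; ring. Qed.

Lemma sumR_const m a : sumR m (fun _ => a) = INR m * a.
Proof. induction m; simpl sumR; [simpl; ring|]. rewrite IHm, S_INR. ring. Qed.

Lemma sumR_zero m f : (forall k, (k < m)%nat -> f k = 0) -> sumR m f = 0.
Proof. intros H. rewrite (sumR_ext m f (fun _ => 0)), sumR_const by auto. ring. Qed.

Lemma sumR_le m f g : (forall k, (k < m)%nat -> f k <= g k) -> sumR m f <= sumR m g.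
Proof.
  induction m; simpl; intros H; [lra|].
  pose proof (H m ltac:(lia)). pose proof (IHm ltac:(intros; apply H; lia)). lra.
Qed.

Lemma sumR_nonneg m f : (forall k, (k < m)%nat -> 0 <= f k) -> 0 <= sumR m f.
Proof. intros H. rewrite <- (sumR_zero m (fun _ => 0)) by auto. apply sumR_le; auto. Qed.

Lemma sumR_split a b f : sumR (a + b) f = sumR a f + sumR b (fun i => f (a + i)%nat).
Proof.
  induction b; simpl; [rewrite Nat.add_0_r; ring|].
  rewrite Nat.add_succ_r; simpl; rewrite IHb; ring.
Qed.

Lemma sumR_le_length a b f : (a <= b)%nat -> (forall k, 0 <= f k) -> sumR a f <= sumR b f.
Proof.
  intros Hab Hf. replace b with (a + (b - a))%nat by lia. rewrite sumR_split.
  pose proof (sumR_nonneg (b - a) (fun i => f (a + i)%nat) ltac:(intros; apply Hf)). lra.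
Qed.

Lemma sumR_swap m n F :
  sumR m (fun i => sumR n (fun j => F i j)) = sumR n (fun j => sumR m (fun i => F i j)).
Proof.
  induction m; simpl; [symmetry; apply sumR_zero; auto|].
  rewrite IHm, <- sumR_add. reflexivity.
Qed.

Lemma sumR_single m F i0 :
  (i0 < m)%nat -> (forall k, (k < m)%nat -> k <> i0 -> F k = 0) -> sumR m F = F i0.
Proof.
  induction m; intros Hi H; [lia|]. simpl. destruct (Nat.eq_dec i0 m).
  - subst. rewrite sumR_zero; [ring|]. intros; apply H; lia.
  - rewrite IHm, (H m) by (try lia; intros; apply H; lia). ring.
Qed.

Lemma sumR_indicator m k (a : R) :
  (k < m)%nat -> sumR m (fun j => if Nat.eq_dec j k then a else 0) = a.
Proof.
  intros. rewrite (sumR_single _ _ k); auto; [destruct Nat.eq_dec; auto; lia|].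
  intros. destruct Nat.eq_dec; auto; lia.
Qed.

Lemma sumR_three_valued m k1 k2 a b c : (k1 < m)%nat -> (k2 < m)%nat -> k1 <> k2 ->
  sumR m (fun j => if Nat.eq_dec j k1 then a else if Nat.eq_dec j k2 then b else c)
  = a + b + (INR m - 2) * c.
Proof.
  intros H1 H2 H12.
  transitivity (sumR m (fun j => c + ((if Nat.eq_dec j k1 then a - c else 0)
                                  + (if Nat.eq_dec j k2 then b - c else 0)))).
  { apply sumR_ext; intros. repeat destruct Nat.eq_dec; subst; try lia; ring. }
  rewrite !sumR_add, sumR_const, !sumR_indicator by auto. ring.
Qed.

Lemma sumR_sq_zero m f : sumR m (fun k => f k * f k) = 0 -> forall k, (k < m)%nat -> f k = 0.
Proof.
  induction m; simpl; intros H k Hk; [lia|].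
  pose proof (sumR_nonneg m (fun k => f k * f k) ltac:(intros; nra)).
  assert (f m * f m = 0) by nra.
  destruct (Nat.eq_dec k m); [subst; nra|]. apply IHm; [nra|lia].
Qed.

Lemma sumR_pairs P G : sumR P (fun i => G (2 * i)%nat + G (2 * i + 1)%nat) = sumR (2 * P) G.
Proof.
  induction P; [simpl; ring|]. replace (2 * S P)%nat with (S (S (2 * P))) by lia.
  cbn [sumR]. rewrite IHP. replace (2 * P + 1)%nat with (S (2 * P)) by lia. ring.
Qed.

Lemma sumR_gt m (G : nat -> R) c : (forall k, (k < m)%nat -> c <= G k) ->
  (exists k, (k < m)%nat /\ c < G k) -> INR m * c < sumR m G.
Proof.
  induction m; intros H [k [Hk Hc]]; [lia|]. cbn [sumR]. rewrite S_INR.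
  destruct (Nat.eq_dec k m).
  - subst. assert (INR m * c <= sumR m G).
    { rewrite <- sumR_const. apply sumR_le; intros; apply H; lia. }
    lra.
  - assert (INR m * c < sumR m G)
      by (apply IHm; [intros; apply H; lia | exists k; split; auto; lia]).
    pose proof (H m ltac:(lia)). lra.
Qed.

(* Discrete Cauchy-Schwarz along a path: [(z 0 - z K)^2 <= K * sum of squared increments]. *)
Lemma sumR_increments_sq (z : nat -> R) K : (1 <= K)%nat ->
  (z 0%nat - z K) ^ 2 / INR K <= sumR K (fun j => (z j - z (S j)) ^ 2).
Proof.
  induction K; intros HK; [lia|]. destruct (Nat.eq_dec K 0); [subst; simpl; lra|].
  specialize (IHK ltac:(lia)). cbn [sumR].
  assert (HK0 : 0 < INR K) by (apply lt_0_INR; lia).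
  rewrite S_INR.
  set (a := z 0%nat - z K) in *. set (c := z K - z (S K)).
  replace (z 0%nat - z (S K)) with (a + c) by (unfold a, c; ring).
  assert (E : a ^ 2 / INR K + c ^ 2 - (a + c) ^ 2 / (INR K + 1)
              = (a - INR K * c) ^ 2 / (INR K * (INR K + 1))) by (field; lra).
  assert (0 <= (a - INR K * c) ^ 2 / (INR K * (INR K + 1))).
  { unfold Rdiv. apply Rmult_le_pos; [apply pow2_ge_0|].
    apply Rlt_le, Rinv_0_lt_compat. nra. }
  lra.
Qed.

(* Vectors of R^d are handled through their coordinates [coord z k], extended by 0
   outside 0..d-1, so that all identities reduce to identities between finite sums. *)
Section Coordinates.
Context {d : nat}.

Definition coord (z : vec d) (k : nat) : R :=
  match lt_dec k d with left H => z (exist _ k H) | right _ => 0 end.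

Definition unit_vec (j : nat) : vec d :=
  fun i => if Nat.eq_dec (proj1_sig i) j then 1 else 0.

Definition vsum (P : nat) (F : nat -> vec d) : vec d := fun i => sumR P (fun k => F k i).

Lemma vec_ext (x y : vec d) : (forall k, coord x k = coord y k) -> x = y.
Proof.
  intros H. apply functional_extensionality. intros [k Hk]. specialize (H k). unfold coord in H.
  destruct lt_dec; [|contradiction]. rewrite (proof_irrelevance _ Hk l). auto.
Qed.

Lemma coord_out (z : vec d) k : (d <= k)%nat -> coord z k = 0.
Proof. intros; unfold coord; destruct lt_dec; auto; lia. Qed.

Lemma coord_add (x y : vec d) k : coord (vadd x y) k = coord x k + coord y k.
Proof. unfold coord, vadd; destruct lt_dec; ring. Qed.
Lemma coord_sub (x y : vec d) k : coord (vsub x y) k = coord x k - coord y k.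
Proof. unfold coord, vsub; destruct lt_dec; ring. Qed.
Lemma coord_scale a (x : vec d) k : coord (vscale a x) k = a * coord x k.
Proof. unfold coord, vscale; destruct lt_dec; ring. Qed.
Lemma coord_vsum P (F : nat -> vec d) j : coord (vsum P F) j = sumR P (fun k => coord (F k) j).
Proof. unfold coord, vsum; destruct lt_dec; auto. symmetry; apply sumR_zero; auto. Qed.

Lemma coord_unit_same j : (j < d)%nat -> coord (unit_vec j) j = 1.
Proof. intros; unfold coord, unit_vec; destruct lt_dec; [|lia]. simpl. destruct Nat.eq_dec; lia || auto. Qed.
Lemma coord_unit_diff j k : k <> j -> coord (unit_vec j) k = 0.
Proof. intros; unfold coord, unit_vec; destruct lt_dec; auto. simpl. destruct Nat.eq_dec; auto; lia. Qed.

Lemma inner_coord (x y : vec d) : inner x y = sumR d (fun k => coord x k * coord y k).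
Proof. unfold inner, sum_idx, coord. apply sumR_ext; intros. destruct lt_dec; ring. Qed.

Lemma inner_sym (x y : vec d) : inner x y = inner y x.
Proof. rewrite !inner_coord. apply sumR_ext; intros; ring. Qed.
Lemma inner_add_l (x y z : vec d) : inner (vadd x y) z = inner x z + inner y z.
Proof. rewrite !inner_coord, <- sumR_add. apply sumR_ext; intros; rewrite coord_add; ring. Qed.
Lemma inner_sub_l (x y z : vec d) : inner (vsub x y) z = inner x z - inner y z.
Proof. rewrite !inner_coord, <- sumR_sub. apply sumR_ext; intros; rewrite coord_sub; ring. Qed.
Lemma inner_scale_l a (x z : vec d) : inner (vscale a x) z = a * inner x z.
Proof. rewrite !inner_coord, <- sumR_scal. apply sumR_ext; intros; rewrite coord_scale; ring. Qed.
Lemma inner_add_r (x y z : vec d) : inner z (vadd x y) = inner z x + inner z y.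
Proof. rewrite !(inner_sym z). apply inner_add_l. Qed.
Lemma inner_sub_r (x y z : vec d) : inner z (vsub x y) = inner z x - inner z y.
Proof. rewrite !(inner_sym z). apply inner_sub_l. Qed.
Lemma inner_scale_r a (x z : vec d) : inner z (vscale a x) = a * inner z x.
Proof. rewrite !(inner_sym z). apply inner_scale_l. Qed.

Lemma inner_unit_l j (h : vec d) : inner (unit_vec j) h = coord h j.
Proof.
  rewrite inner_coord. destruct (lt_dec j d).
  - rewrite (sumR_single d _ j), coord_unit_same by (auto; intros; rewrite coord_unit_diff by auto; ring).
    ring.
  - rewrite coord_out by lia. apply sumR_zero; intros. rewrite coord_unit_diff by lia; ring.
Qed.

Lemma inner_vsum_l P (F : nat -> vec d) h :
  inner (vsum P F) h = sumR P (fun k => inner (F k) h).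
Proof.
  rewrite inner_coord. erewrite sumR_ext.
  2:{ intros. rewrite coord_vsum, <- sumR_scalr. reflexivity. }
  rewrite sumR_swap. apply sumR_ext; intros. rewrite inner_coord; auto.
Qed.

Lemma inner_nonneg (x : vec d) : 0 <= inner x x.
Proof. rewrite inner_coord. apply sumR_nonneg; intros; nra. Qed.

Lemma inner_self_zero (x : vec d) : inner x x = 0 -> forall k, coord x k = 0.
Proof.
  intros H k. rewrite inner_coord in H. destruct (lt_dec k d).
  - eapply (sumR_sq_zero d (coord x)); eauto.
  - apply coord_out; lia.
Qed.

Lemma norm2_sq (x : vec d) : norm2 x ^ 2 = inner x x.
Proof. unfold norm2. rewrite pow2_sqrt; auto. apply inner_nonneg. Qed.

Lemma norm2_le_scale (a b : vec d) L :
  0 <= L -> inner a a <= L ^ 2 * inner b b -> norm2 a <= L * norm2 b.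
Proof.
  intros HL H. unfold norm2. rewrite <- (sqrt_pow2 L), <- sqrt_mult by (auto using pow2_ge_0, inner_nonneg).
  apply sqrt_le_1_alt. lra.
Qed.

Lemma vsub_via (x v y : vec d) : vsub x v = vsub (vsub x y) (vsub v y).
Proof. apply vec_ext; intros; rewrite !coord_sub; ring. Qed.
Lemma vadd_vsub (y v : vec d) : vadd y (vsub v y) = v.
Proof. apply vec_ext; intros; rewrite coord_add, coord_sub; ring. Qed.

End Coordinates.

(* The Householder reflection exchanging [x0] and [|x0| e_0]. Conjugating the hard
   functions by it lets the chain argument start from an arbitrary initial point. *)
Section Householder.
Context {d : nat}.
Variable x0 : vec d.

Definition householder_axis : vec d := vsub x0 (vscale (norm2 x0) (unit_vec 0)).
Definition householder (v : vec d) : vec d :=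
  vsub v (vscale (2 * inner householder_axis v / inner householder_axis householder_axis)
                 householder_axis).

Local Notation u := householder_axis.

Lemma coord_householder v k :
  coord (householder v) k = coord v k - (2 * inner u v / inner u u) * coord u k.
Proof. unfold householder. rewrite coord_sub, coord_scale. auto. Qed.

(* When [x0] is already a nonnegative multiple of e_0 the reflection is the identity. *)
Lemma householder_degenerate : inner u u = 0 -> forall v, householder v = v.
Proof.
  intros H v. apply vec_ext; intros k.
  rewrite coord_householder, (inner_self_zero _ H k). ring.
Qed.

Lemma householder_add x y : householder (vadd x y) = vadd (householder x) (householder y).
Proof.
  apply vec_ext; intros k.
  rewrite coord_add, !coord_householder, coord_add, inner_add_r. unfold Rdiv. ring.
Qed.

Lemma householder_sub x y : householder (vsub x y) = vsub (householder x) (householder y).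
Proof.
  apply vec_ext; intros k.
  rewrite coord_sub, !coord_householder, coord_sub, inner_sub_r. unfold Rdiv. ring.
Qed.

Lemma coord_householder_vsum K (c : nat -> R) (w : nat -> vec d) j :
  coord (householder (vsum K (fun k => vscale (c k) (w k)))) j
  = sumR K (fun k => c k * coord (householder (w k)) j).
Proof.
  rewrite coord_householder, coord_vsum, (inner_sym u), inner_vsum_l.
  erewrite (sumR_ext K (fun k => inner _ _)).
  2:{ intros. rewrite inner_scale_l, inner_sym. reflexivity. }
  erewrite (sumR_ext K (fun k => c k * coord (householder (w k)) j)).
  2:{ intros. rewrite coord_householder. reflexivity. }
  erewrite (sumR_ext K (fun k => coord (vscale _ _) j)).
  2:{ intros. rewrite coord_scale. reflexivity. }
  set (uu := inner u u).
  replace (sumR K (fun k => c k * (coord (w k) j - 2 * inner u (w k) / uu * coord u j)))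
    with (sumR K (fun k => c k * coord (w k) j)
          + (- (2 / uu * coord u j)) * sumR K (fun k => c k * inner u (w k))).
  2:{ rewrite <- sumR_scal, <- sumR_add. apply sumR_ext; intros. unfold Rdiv. ring. }
  unfold Rdiv. ring.
Qed.

Lemma householder_selfadjoint x y : inner (householder x) y = inner x (householder y).
Proof.
  unfold householder. rewrite inner_sub_l, inner_sub_r, inner_scale_l, inner_scale_r.
  rewrite (inner_sym u y), (inner_sym x u). unfold Rdiv; ring.
Qed.

Lemma householder_involutive x : householder (householder x) = x.
Proof.
  destruct (Req_dec (inner u u) 0) as [H|H]; [rewrite !householder_degenerate; auto|].
  apply vec_ext; intros k. rewrite coord_householder. unfold householder at 1 2.
  rewrite coord_sub, coord_scale, inner_sub_r, inner_scale_r. field. auto.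
Qed.

Lemma inner_householder x y : inner (householder x) (householder y) = inner x y.
Proof. rewrite householder_selfadjoint, householder_involutive. auto. Qed.

Lemma norm2_householder x : norm2 (householder x) = norm2 x.
Proof. unfold norm2. rewrite inner_householder. auto. Qed.

Lemma dist_householder a b : norm2 (vsub a (householder b)) = norm2 (vsub (householder a) b).
Proof.
  rewrite <- (norm2_householder (vsub a (householder b))), householder_sub,
    householder_involutive. auto.
Qed.

Lemma householder_init : (1 <= d)%nat -> householder x0 = vscale (norm2 x0) (unit_vec 0).
Proof.
  intros Hd. destruct (Req_dec (inner u u) 0) as [H|H].
  - rewrite householder_degenerate by auto. apply vec_ext; intros k.
    pose proof (inner_self_zero _ H k) as Hk. unfold householder_axis in Hk.
    rewrite coord_sub in Hk. lra.
  - assert (E1 : inner u x0 = inner x0 x0 - norm2 x0 * coord x0 0).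
    { unfold householder_axis. rewrite inner_sub_l, inner_scale_l, inner_unit_l. auto. }
    assert (E2 : inner u u = 2 * (inner x0 x0 - norm2 x0 * coord x0 0)).
    { unfold householder_axis at 2. rewrite inner_sub_r, inner_scale_r, E1.
      unfold householder_axis.
      rewrite inner_sub_l, inner_scale_l, (inner_sym x0 (unit_vec 0)), !inner_unit_l,
        coord_unit_same, <- norm2_sq by lia. ring. }
    apply vec_ext; intros k. rewrite coord_householder, E1, E2.
    unfold householder_axis. rewrite coord_sub. rewrite E2 in H. field. lra.
Qed.

End Householder.

Lemma Rdiv_nonneg a b : 0 <= a -> 0 < b -> 0 <= a / b.
Proof. intros. unfold Rdiv. apply Rmult_le_pos; auto. apply Rlt_le, Rinv_0_lt_compat; auto. Qed.

Lemma quadratic_discriminant a b c : (forall t, 0 <= a + 2 * t * b + t ^ 2 * c) -> b ^ 2 <= a * c.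
Proof.
  intros H. destruct (Req_dec c 0) as [Hc|Hc].
  - subst. destruct (Req_dec b 0); [subst; nra|].
    specialize (H (- (a + 1) / (2 * b))).
    replace (2 * (- (a + 1) / (2 * b)) * b) with (- (a + 1)) in H by (field; auto). nra.
  - assert (Hpos : 0 < c).
    { destruct (Rlt_dec 0 c); auto. exfalso.
      set (T := sqrt ((Rabs a + 1) / (- c))).
      assert (HT : T ^ 2 = (Rabs a + 1) / (- c)).
      { unfold T. rewrite pow2_sqrt; auto. apply Rdiv_nonneg; [pose proof (Rabs_pos a)|]; lra. }
      pose proof (H T). pose proof (H (- T)).
      assert (T ^ 2 * c = - (Rabs a + 1)) by (rewrite HT; field; lra).
      pose proof (Rle_abs a). nra. }
    specialize (H (- b / c)).
    replace (a + 2 * (- b / c) * b + (- b / c) ^ 2 * c) with (a - b ^ 2 / c) in H by (field; auto).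
    apply Rmult_le_reg_r with (/ c); [apply Rinv_0_lt_compat; lra|].
    replace (a * c * / c) with a by (field; auto). unfold Rdiv in H. lra.
Qed.

(* The building block of the hard instance: the convex quadratic
     quad c z = a/2 (b - z_1)^2 + w/2 sum_(i < P) (z_(s+2i) - z_(s+2i+1))^2
   with anchor weight a, target b, link weight w, first linked coordinate s and P links.
   Its gradient and proximal map only spread information along the links. *)
Record qparams := mkQ { q_anchor : R; q_target : R; q_link : R; q_start : nat; q_links : nat }.

(* Parameters for which [quad c] is an L-smooth function on R^d whose links stay inside
   the coordinates 1..d-1, and never touch coordinate 1 when the anchor is active. *)
Definition admissible (L : R) (d : nat) (c : qparams) : Prop :=
  0 <= q_anchor c <= L /\ 0 <= q_link c /\ 2 * q_link c <= L /\
  (q_anchor c = 0 \/ (2 <= q_start c)%nat) /\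
  (1 <= q_start c)%nat /\ (q_start c + 2 * q_links c <= d)%nat /\ (2 <= d)%nat.

Section Quadratic.
Context {d : nat}.
Variable c : qparams.
Local Notation a := (q_anchor c).
Local Notation b := (q_target c).
Local Notation w := (q_link c).
Local Notation s := (q_start c).
Local Notation P := (q_links c).

Definition link (z : vec d) (i : nat) : R := coord z (s + 2 * i) - coord z (s + 2 * i + 1).
Definition quad (z : vec d) : R :=
  a / 2 * (b - coord z 1) ^ 2 + w / 2 * sumR P (fun i => link z i ^ 2).
Definition link_vec (co : nat -> R) : vec d :=
  vsum P (fun i => vscale (co i) (vsub (unit_vec (s + 2 * i)) (unit_vec (s + 2 * i + 1)))).
Definition quad_grad (z : vec d) : vec d :=
  vadd (vscale (a * (coord z 1 - b)) (unit_vec 1)) (vscale w (link_vec (link z))).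
Definition quad_hess (h : vec d) : vec d :=
  vadd (vscale (a * coord h 1) (unit_vec 1)) (vscale w (link_vec (link h))).
Definition quad_form (h k : vec d) : R :=
  a * coord h 1 * coord k 1 + w * sumR P (fun i => link h i * link k i).
Definition quad_prox (g : R) (x : vec d) : vec d :=
  vsub (vsub x (vscale (g * a * ((coord x 1 - b) / (1 + g * a))) (unit_vec 1)))
       (vscale (g * w) (link_vec (fun i => link x i / (1 + 2 * g * w)))).

Lemma coord_link_vec co j : coord (link_vec co) j =
  sumR P (fun i => co i * (coord (@unit_vec d (s + 2 * i)) j - coord (@unit_vec d (s + 2 * i + 1)) j)).
Proof. unfold link_vec. rewrite coord_vsum. apply sumR_ext; intros. rewrite coord_scale, coord_sub. auto. Qed.

Lemma inner_link_vec co h : inner (link_vec co) h = sumR P (fun i => co i * link h i).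
Proof.
  unfold link_vec. rewrite inner_vsum_l. apply sumR_ext; intros.
  rewrite inner_scale_l, inner_sub_l, !inner_unit_l. auto.
Qed.

Lemma link_add x y i : link (vadd x y) i = link x i + link y i.
Proof. unfold link; rewrite !coord_add; ring. Qed.
Lemma link_sub x y i : link (vsub x y) i = link x i - link y i.
Proof. unfold link; rewrite !coord_sub; ring. Qed.
Lemma link_scale t x i : link (vscale t x) i = t * link x i.
Proof. unfold link; rewrite !coord_scale; ring. Qed.

Lemma inner_quad_grad z h :
  inner (quad_grad z) h = a * (coord z 1 - b) * coord h 1 + w * sumR P (fun i => link z i * link h i).
Proof. unfold quad_grad. rewrite inner_add_l, !inner_scale_l, inner_unit_l, inner_link_vec. ring. Qed.

Lemma inner_quad_hess h k : inner (quad_hess h) k = quad_form h k.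
Proof. unfold quad_hess, quad_form. rewrite inner_add_l, !inner_scale_l, inner_unit_l, inner_link_vec. ring. Qed.

Lemma quad_expand z h : quad (vadd z h) = quad z + inner (quad_grad z) h + 1 / 2 * quad_form h h.
Proof.
  unfold quad, quad_form. rewrite inner_quad_grad, coord_add.
  erewrite (sumR_ext _ (fun i => link (vadd z h) i ^ 2)) by (intros; rewrite link_add; reflexivity).
  replace (sumR P (fun i => (link z i + link h i) ^ 2)) with
    (sumR P (fun i => link z i ^ 2) + 2 * sumR P (fun i => link z i * link h i)
     + sumR P (fun i => link h i * link h i)).
  2:{ rewrite <- sumR_scal, <- !sumR_add. apply sumR_ext; intros; ring. }
  field.
Qed.

Lemma quad_grad_sub x y : vsub (quad_grad x) (quad_grad y) = quad_hess (vsub x y).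
Proof.
  apply vec_ext; intros k. unfold quad_grad, quad_hess.
  rewrite !coord_sub, !coord_add, !coord_scale, !coord_link_vec.
  erewrite (sumR_ext _ (fun i => link (vsub x y) i * _)).
  2:{ intros. rewrite link_sub, Rmult_minus_distr_r. reflexivity. }
  rewrite sumR_sub. ring.
Qed.

Hypothesis weights_nonneg : 0 <= a /\ 0 <= w.

Lemma quad_form_nonneg h : 0 <= quad_form h h.
Proof.
  unfold quad_form. assert (0 <= sumR P (fun i => link h i * link h i))
    by (apply sumR_nonneg; intros; nra).
  nra.
Qed.

Lemma quad_form_cauchy_schwarz h k : quad_form h k ^ 2 <= quad_form h h * quad_form k k.
Proof.
  apply quadratic_discriminant. intros t.
  replace (quad_form h h + 2 * t * quad_form h k + t ^ 2 * quad_form k k)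
    with (quad_form (vadd h (vscale t k)) (vadd h (vscale t k))).
  { apply quad_form_nonneg. }
  unfold quad_form. rewrite coord_add, coord_scale.
  erewrite (sumR_ext _ (fun i => link (vadd h _) i * _))
    by (intros; rewrite link_add, link_scale; reflexivity).
  replace (sumR P (fun i => (link h i + t * link k i) * (link h i + t * link k i))) with
    (sumR P (fun i => link h i * link h i) + 2 * t * sumR P (fun i => link h i * link k i)
     + t ^ 2 * sumR P (fun i => link k i * link k i)).
  2:{ rewrite <- !sumR_scal, <- !sumR_add. apply sumR_ext; intros; ring. }
  ring.
Qed.

Lemma quad_nonneg z : 0 <= quad z.
Proof.
  unfold quad.
  assert (0 <= sumR P (fun i => link z i ^ 2)) by (apply sumR_nonneg; intros; nra).
  pose proof (pow2_ge_0 (b - coord z 1)). apply Rplus_le_le_0_compat; apply Rmult_le_pos; lra.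
Qed.

End Quadratic.

Section AdmissibleQuadratic.
Context {d : nat}.
Variables (L : R) (c : qparams).
Hypothesis Hc : admissible L d c.
Local Notation a := (q_anchor c).
Local Notation b := (q_target c).
Local Notation w := (q_link c).
Local Notation s := (q_start c).
Local Notation P := (q_links c).

Let weights_nonneg : 0 <= a /\ 0 <= w.
Proof. destruct Hc as (? & ? & _). lra. Qed.

Lemma links_sq_le (h : vec d) :
  sumR P (fun i => link c h i * link c h i) <= 2 * sumR (2 * P) (fun j => coord h (s + j) ^ 2).
Proof.
  rewrite <- sumR_pairs, <- sumR_scal. apply sumR_le; intros. unfold link.
  rewrite !Nat.add_assoc. pose proof (pow2_ge_0 (coord h (s + 2 * k) + coord h (s + 2 * k + 1))).
  nra.
Qed.

(* The Hessian quadratic form is bounded by L: this is L-smoothness. *)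
Lemma quad_form_bound (h : vec d) : quad_form c h h <= L * inner h h.
Proof.
  destruct Hc as (Ha & Hw & Hw2 & Hs & Hs1 & HsP & Hd).
  set (F := fun j => coord h j ^ 2).
  assert (HF : forall j, 0 <= F j) by (intros; apply pow2_ge_0).
  set (S2 := sumR (2 * P) (fun j => F (s + j)%nat)).
  assert (HS2 : 0 <= S2) by (apply sumR_nonneg; auto).
  assert (Hhead : 0 <= sumR s F) by (apply sumR_nonneg; auto).
  assert (Hsplit : sumR s F + S2 <= inner h h).
  { unfold S2. rewrite <- sumR_split.
    replace (inner h h) with (sumR d F)
      by (rewrite inner_coord; apply sumR_ext; intros; unfold F; ring).
    apply sumR_le_length; [lia|auto]. }
  assert (Hlinks : w * sumR P (fun i => link c h i * link c h i) <= L * S2).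
  { pose proof (links_sq_le h). apply Rle_trans with (w * (2 * S2)); [apply Rmult_le_compat_l; auto|].
    nra. }
  unfold quad_form. destruct Hs as [Ha0|Hs].
  - rewrite Ha0. nra.
  - assert (H1 : F 1%nat <= sumR s F).
    { apply Rle_trans with (sumR 2 F); [simpl; pose proof (HF 0%nat); lra|].
      apply sumR_le_length; auto. }
    assert (a * F 1%nat <= L * F 1%nat) by (apply Rmult_le_compat_r; auto; lra).
    unfold F in *. nra.
Qed.

Lemma quad_hess_bound (h : vec d) : inner (quad_hess c h) (quad_hess c h) <= L ^ 2 * inner h h.
Proof.
  pose proof (quad_form_bound h) as B1. pose proof (quad_form_bound (quad_hess c h)) as B2.
  pose proof (quad_form_cauchy_schwarz c weights_nonneg h (quad_hess c h)) as CS.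
  rewrite <- inner_quad_hess in CS.
  set (X := inner (quad_hess c h) (quad_hess c h)) in *.
  assert (0 <= X) by apply inner_nonneg.
  pose proof (quad_form_nonneg c weights_nonneg h). pose proof (inner_nonneg h).
  assert (L0 : 0 <= L) by (destruct Hc; lra).
  destruct (Req_dec X 0) as [->|HX]; [nra|].
  assert (X <= L * quad_form c h h).
  { apply Rmult_le_reg_r with X; [lra|].
    assert (quad_form c h h * quad_form c (quad_hess c h) (quad_hess c h)
            <= quad_form c h h * (L * X)) by (apply Rmult_le_compat_l; lra).
    nra. }
  assert (L * quad_form c h h <= L * (L * inner h h)) by (apply Rmult_le_compat_l; lra).
  nra.
Qed.

Lemma link_vec_at co i0 : (i0 < P)%nat ->
  coord (@link_vec d c co) (s + 2 * i0) = co i0 /\ coord (@link_vec d c co) (s + 2 * i0 + 1) = - co i0.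
Proof.
  destruct Hc as (_ & _ & _ & _ & _ & HsP & _). intros Hi.
  rewrite !coord_link_vec. split; rewrite (sumR_single _ _ i0); auto;
    try (rewrite coord_unit_same, coord_unit_diff by lia; ring);
    intros; rewrite !coord_unit_diff by lia; ring.
Qed.

Lemma link_vec_coord1 co : (2 <= s)%nat -> coord (@link_vec d c co) 1 = 0.
Proof. intros. rewrite coord_link_vec. apply sumR_zero; intros. rewrite !coord_unit_diff by lia. ring. Qed.

Lemma quad_prox_coords g (x : vec d) : 0 < g ->
  a * (coord (quad_prox c g x) 1 - b) = a * ((coord x 1 - b) / (1 + g * a)) /\
  (forall i, (i < P)%nat -> link c (quad_prox c g x) i = link c x i / (1 + 2 * g * w)).
Proof.
  pose proof weights_nonneg as [Ha Hw].
  destruct Hc as (_ & _ & _ & Hs & _ & _ & Hd). intros Hg. split.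
  - destruct Hs as [Hs|Hs]; [rewrite Hs; ring|].
    unfold quad_prox. rewrite !coord_sub, !coord_scale, coord_unit_same, link_vec_coord1 by lia.
    field. nra.
  - intros i Hi. unfold quad_prox. rewrite !link_sub, !link_scale.
    set (co := fun i => link c x i / (1 + 2 * g * w)).
    assert (Hlv : link c (@link_vec d c co) i = 2 * co i).
    { destruct (link_vec_at co i Hi) as [E1 E2]. unfold link at 1. rewrite E1, E2. ring. }
    assert (He : a * link c (@unit_vec d 1) i = 0).
    { destruct Hs as [Hs|Hs]; [rewrite Hs; ring|]. unfold link. rewrite !coord_unit_diff by lia. ring. }
    rewrite Hlv. unfold co.
    replace (g * a * ((coord x 1 - b) / (1 + g * a)) * link c (unit_vec 1) i) with
      (g * ((coord x 1 - b) / (1 + g * a)) * (a * link c (@unit_vec d 1) i)) by ring.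
    rewrite He. field. nra.
Qed.

Lemma quad_prox_optimality g (x : vec d) : 0 < g ->
  vsub x (quad_prox c g x) = vscale g (quad_grad c (quad_prox c g x)).
Proof.
  intros Hg. destruct (quad_prox_coords g x Hg) as [A B].
  apply vec_ext; intros k. rewrite coord_sub, coord_scale. unfold quad_grad at 1.
  rewrite coord_add, !coord_scale, A, coord_link_vec.
  erewrite (sumR_ext _ (fun i => link c (quad_prox c g x) i * _))
    by (intros; rewrite B by auto; reflexivity).
  unfold quad_prox at 1. rewrite !coord_sub, !coord_scale, coord_link_vec. ring.
Qed.

Lemma quad_prox_spec g (x v : vec d) : 0 < g ->
  quad c (quad_prox c g x) + norm2 (vsub x (quad_prox c g x)) ^ 2 / (2 * g)
  <= quad c v + norm2 (vsub x v) ^ 2 / (2 * g).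
Proof.
  intros Hg. set (y := quad_prox c g x).
  pose proof (quad_prox_optimality g x Hg) as E. fold y in E.
  assert (G1 : quad c y + inner (quad_grad c y) (vsub v y) <= quad c v).
  { rewrite <- (vadd_vsub y v) at 2. rewrite quad_expand.
    pose proof (quad_form_nonneg c weights_nonneg (vsub v y)). lra. }
  rewrite !norm2_sq, (vsub_via x v y).
  set (p := vsub x y) in *. set (q := vsub v y) in *.
  assert (N : inner (vsub p q) (vsub p q) = inner p p - 2 * inner p q + inner q q).
  { rewrite inner_sub_l, !inner_sub_r, (inner_sym q p). ring. }
  rewrite N, E, !inner_scale_l, !inner_scale_r.
  pose proof (inner_nonneg q).
  assert (0 <= inner q q / (2 * g)) by (apply Rdiv_nonneg; lra).
  replace ((g * (g * inner (quad_grad c y) (quad_grad c y)) - 2 * (g * inner (quad_grad c y) q)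
            + inner q q) / (2 * g))
    with (g * inner (quad_grad c y) (quad_grad c y) / 2 - inner (quad_grad c y) q
          + inner q q / (2 * g)) by (field; lra).
  replace (g * (g * inner (quad_grad c y) (quad_grad c y)) / (2 * g))
    with (g * inner (quad_grad c y) (quad_grad c y) / 2) by (field; lra).
  lra.
Qed.

End AdmissibleQuadratic.

(* The component functions actually used: admissible quadratics read in the rotated
   coordinates [householder x0 x]. They inherit smoothness, convexity and an explicit
   proximal map, since the reflection is a linear isometry. *)
Section RotatedQuadratic.
Context {d : nat}.
Variables (x0 : vec d) (L : R) (c : qparams).
Hypothesis Hc : admissible L d c.

Definition rquad (x : vec d) : R := quad c (householder x0 x).
Definition rquad_grad (x : vec d) : vec d := householder x0 (quad_grad c (householder x0 x)).
Definition rquad_prox (g : R) (x : vec d) : vec d :=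
  householder x0 (quad_prox c g (householder x0 x)).

Let weights_nonneg : 0 <= q_anchor c /\ 0 <= q_link c.
Proof. destruct Hc as (? & ? & _). lra. Qed.

Lemma rquad_expand x h : rquad (vadd x h) = rquad x + inner (rquad_grad x) h
  + 1 / 2 * quad_form c (householder x0 h) (householder x0 h).
Proof. unfold rquad, rquad_grad. rewrite householder_add, quad_expand, householder_selfadjoint. auto. Qed.

Lemma rquad_smooth : 0 < L -> L_smooth L rquad rquad_grad.
Proof.
  intros HL. split.
  - intros x eps Heps. exists (eps / L). split; [apply Rdiv_lt_0_compat; auto|].
    intros h [Hh1 Hh2]. rewrite rquad_expand.
    pose proof (quad_form_bound L c Hc (householder x0 h)) as B.
    rewrite inner_householder, <- norm2_sq in B.
    pose proof (quad_form_nonneg c weights_nonneg (householder x0 h)).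
    replace (rquad x + inner (rquad_grad x) h + 1 / 2 * quad_form c (householder x0 h) (householder x0 h)
             - rquad x - inner (rquad_grad x) h)
      with (1 / 2 * quad_form c (householder x0 h) (householder x0 h)) by ring.
    rewrite Rabs_pos_eq by lra.
    assert (L * norm2 h < eps).
    { apply (Rmult_lt_compat_l L) in Hh2; auto.
      replace (L * (eps / L)) with eps in Hh2 by (field; lra). auto. }
    assert (L * norm2 h ^ 2 <= eps * norm2 h).
    { replace (L * norm2 h ^ 2) with (L * norm2 h * norm2 h) by ring.
      apply Rmult_le_compat_r; lra. }
    nra.
  - intros x y. unfold rquad_grad.
    rewrite <- householder_sub, norm2_householder, quad_grad_sub, <- householder_sub,
      <- (norm2_householder x0 (vsub x y)).
    apply norm2_le_scale; [lra|]. apply quad_hess_bound; auto.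
Qed.

Lemma rquad_first_order x y : rquad x + inner (rquad_grad x) (vsub y x) <= rquad y.
Proof.
  rewrite <- (vadd_vsub x y) at 2. rewrite rquad_expand.
  pose proof (quad_form_nonneg c weights_nonneg (householder x0 (vsub y x))). lra.
Qed.

Lemma rquad_convex : convex rquad.
Proof.
  intros x y lam Hl. set (z := vadd (vscale lam x) (vscale (1 - lam) y)).
  pose proof (rquad_first_order z x) as A. pose proof (rquad_first_order z y) as B.
  rewrite inner_sub_r in A, B.
  assert (Ez : inner (rquad_grad z) z
               = lam * inner (rquad_grad z) x + (1 - lam) * inner (rquad_grad z) y).
  { unfold z at 2. rewrite inner_add_r, !inner_scale_r. auto. }
  apply Rmult_le_compat_l with (r := lam) in A; [|lra].
  apply Rmult_le_compat_l with (r := 1 - lam) in B; [|lra]. nra.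
Qed.

Lemma rquad_prox_spec g x : 0 < g -> is_prox rquad g x (rquad_prox g x).
Proof.
  intros Hg v. unfold rquad, rquad_prox. rewrite householder_involutive.
  rewrite dist_householder, <- (norm2_householder x0 (vsub x v)), householder_sub.
  apply quad_prox_spec with L; auto.
Qed.

End RotatedQuadratic.

(* A gradient or proximal query of an admissible quadratic can reveal
   at most one new coordinate, and none if the quadratic has no links and target 0. *)
Section ZeroChain.
Context {d : nat}.

Definition vanish_after (k : nat) (z : vec d) : Prop := forall j, (k < j)%nat -> coord z j = 0.

Lemma vanish_mono k k' (z : vec d) : (k <= k')%nat -> vanish_after k z -> vanish_after k' z.
Proof. intros H Z j Hj. apply Z; lia. Qed.
Lemma vanish_unit k j : (j <= k)%nat -> vanish_after k (@unit_vec d j).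
Proof. intros H i Hi. apply coord_unit_diff; lia. Qed.
Lemma vanish_add k (x y : vec d) : vanish_after k x -> vanish_after k y -> vanish_after k (vadd x y).
Proof. intros A B j Hj. rewrite coord_add, A, B by auto; ring. Qed.
Lemma vanish_sub k (x y : vec d) : vanish_after k x -> vanish_after k y -> vanish_after k (vsub x y).
Proof. intros A B j Hj. rewrite coord_sub, A, B by auto; ring. Qed.
Lemma vanish_scale k t (x : vec d) : vanish_after k x -> vanish_after k (vscale t x).
Proof. intros A j Hj. rewrite coord_scale, A by auto; ring. Qed.
Lemma vanish_scale_zero k (x : vec d) : vanish_after k (vscale 0 x).
Proof. intros j Hj. rewrite coord_scale; ring. Qed.

Lemma vanish_span x0 k (l : list (vec d)) v : in_span l v ->
  (forall w, In w l -> vanish_after k (householder x0 w)) -> vanish_after k (householder x0 v).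
Proof.
  intros [cf Hcf] H j Hj.
  assert (Ev : v = vsum (length l) (fun m => vscale (cf m) (nth m l vzero))).
  { apply functional_extensionality; intros i. rewrite Hcf. reflexivity. }
  rewrite Ev, coord_householder_vsum. apply sumR_zero; intros m Hm.
  rewrite H by (auto; apply nth_In; auto). ring.
Qed.

Section Steps.
Variable c : qparams.

Lemma vanish_link_vec k co : (forall i, (k < q_start c + 2 * i)%nat -> co i = 0) ->
  vanish_after (S k) (@link_vec d c co).
Proof.
  intros H j Hj. rewrite coord_link_vec. apply sumR_zero; intros i Hi.
  destruct (le_lt_dec (q_start c + 2 * i) k).
  - rewrite !coord_unit_diff by lia. ring.
  - rewrite H by auto. ring.
Qed.

Lemma link_vanish k (z : vec d) i : vanish_after k z -> (k < q_start c + 2 * i)%nat -> link c z i = 0.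
Proof. intros Z H. unfold link. rewrite !Z by lia. ring. Qed.

Lemma quad_grad_vanish k (z : vec d) : vanish_after k z -> vanish_after (S k) (quad_grad c z).
Proof.
  intros Z. apply vanish_add; [apply vanish_scale, vanish_unit; lia|].
  apply vanish_scale, vanish_link_vec. intros; apply (link_vanish k); auto.
Qed.

Lemma quad_prox_vanish k g (x : vec d) : vanish_after k x -> vanish_after (S k) (quad_prox c g x).
Proof.
  intros Z. apply vanish_sub; [apply vanish_sub|].
  - apply (vanish_mono k); auto.
  - apply vanish_scale, vanish_unit; lia.
  - apply vanish_scale, vanish_link_vec. intros; rewrite (link_vanish k) by auto. unfold Rdiv; ring.
Qed.

Hypotheses (no_target : q_target c = 0) (no_links : q_links c = 0%nat).

Lemma idle_link_vec k co : vanish_after k (@link_vec d c co).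
Proof. intros j Hj. rewrite coord_link_vec, no_links. reflexivity. Qed.

Lemma idle_anchor_term k t (z : vec d) : vanish_after k z ->
  vanish_after k (vscale (t * (coord z 1 - q_target c)) (@unit_vec d 1)).
Proof.
  intros Z. destruct k.
  - rewrite Z, no_target, Rminus_0_r, Rmult_0_r by lia. apply vanish_scale_zero.
  - apply vanish_scale, vanish_unit; lia.
Qed.

Lemma quad_grad_idle k (z : vec d) : vanish_after k z -> vanish_after k (quad_grad c z).
Proof.
  intros Z. apply vanish_add; [apply idle_anchor_term; auto|apply vanish_scale, idle_link_vec].
Qed.

Lemma quad_prox_idle k g (x : vec d) : vanish_after k x -> vanish_after k (quad_prox c g x).
Proof.
  intros Z. unfold quad_prox. apply vanish_sub; [apply vanish_sub; auto|apply vanish_scale, idle_link_vec].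
  replace (g * q_anchor c * ((coord x 1 - q_target c) / (1 + g * q_anchor c)))
    with (g * q_anchor c / (1 + g * q_anchor c) * (coord x 1 - q_target c)) by (unfold Rdiv; ring).
  apply idle_anchor_term; auto.
Qed.

End Steps.
End ZeroChain.

(* Sums over idx n and expectations over i.i.d. index sequences. A vector of [vec n] is a
   function on idx n, so [coord] also turns sums over idx n into [sumR]. *)
Section Expectation.
Context {n : nat}.

Lemma sum_idx_coord (F : idx n -> R) : sum_idx n F = sumR n (coord F).
Proof. unfold sum_idx, coord. apply sumR_ext; intros. destruct lt_dec; auto. Qed.

Lemma coord_idx (F : idx n -> R) (i : idx n) : coord F (proj1_sig i) = F i.
Proof.
  destruct i as [j Hj]. unfold coord. simpl. destruct lt_dec; [|lia].
  rewrite (proof_irrelevance _ Hj l). auto.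
Qed.

Lemma sum_idx_nat (F : idx n -> R) (F' : nat -> R) :
  (forall i : idx n, F i = F' (proj1_sig i)) -> sum_idx n F = sumR n F'.
Proof.
  intros H. rewrite sum_idx_coord. apply sumR_ext; intros k Hk. unfold coord.
  destruct lt_dec; [|lia]. rewrite H. auto.
Qed.

Lemma sum_idx_le (F G : idx n -> R) : (forall i, F i <= G i) -> sum_idx n F <= sum_idx n G.
Proof. intros H. rewrite !sum_idx_coord. apply sumR_le; intros. unfold coord; destruct lt_dec; auto; lra. Qed.

Lemma sum_idx_affine (p F : idx n -> R) a b :
  sum_idx n p = 1 -> sum_idx n (fun j => p j * (a + b * F j)) = a + b * sum_idx n (fun j => p j * F j).
Proof.
  intros Hp. rewrite !sum_idx_coord in *.
  transitivity (sumR n (fun k => a * coord p k + b * coord (fun j => p j * F j) k)).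
  { apply sumR_ext; intros. unfold coord. destruct lt_dec; ring. }
  rewrite sumR_add, sumR_scal, sumR_scal, Hp. ring.
Qed.

Lemma expect_mono (p : idx n -> R) t (g1 g2 : list (idx n) -> R) :
  (forall j, 0 <= p j) -> (forall s, g1 s <= g2 s) -> expect p t g1 <= expect p t g2.
Proof.
  revert g1 g2. induction t; intros g1 g2 Hp H; simpl; auto.
  apply IHt; auto. intros s. apply sum_idx_le. intros j. apply Rmult_le_compat_l; auto.
Qed.

Lemma expect_affine (p : idx n -> R) t (g : list (idx n) -> R) a b :
  sum_idx n p = 1 -> expect p t (fun s => a + b * g s) = a + b * expect p t g.
Proof.
  revert g. induction t; intros g Hp; simpl; auto.
  rewrite <- IHt by auto. f_equal. apply functional_extensionality; intros s.
  apply sum_idx_affine; auto.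
Qed.

Fixpoint progress (N : idx n -> nat) (s : list (idx n)) : nat :=
  match s with [] => 0%nat | j :: s' => (N j + progress N s')%nat end.

Lemma expect_progress (p : idx n -> R) t (N : idx n -> nat) : sum_idx n p = 1 ->
  expect p t (fun s => INR (progress N s)) = INR t * sum_idx n (fun j => p j * INR (N j)).
Proof.
  intros Hp. induction t; [simpl; ring|]. simpl expect.
  replace (fun s => sum_idx n (fun j => p j * INR (N j + progress N s)%nat)) with
    (fun s => sum_idx n (fun j => p j * INR (N j)) + 1 * INR (progress N s)).
  2:{ apply functional_extensionality; intros s. symmetry.
      transitivity (sum_idx n (fun j => p j * (INR (progress N s) + 1 * INR (N j)))).
      { unfold sum_idx. apply sumR_ext; intros. destruct lt_dec; [|ring]. rewrite plus_INR. ring. }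
      rewrite sum_idx_affine by auto. ring. }
  rewrite (expect_affine p t (fun s => INR (progress N s))), IHt, S_INR by auto. ring.
Qed.

End Expectation.

Lemma history_invariant {n d} (A : pifo n d) (f : idx n -> vec d -> R)
  (G : idx n -> vec d -> vec d) (P : idx n -> R -> vec d -> vec d)
  (Q : nat -> vec d -> Prop) (N : idx n -> nat) :
  valid_pifo A ->
  (forall k k' v, (k <= k')%nat -> Q k v -> Q k' v) ->
  (forall k l v, in_span l v -> (forall w, In w l -> Q k w) -> Q k v) ->
  Q 0%nat (x_init A) ->
  (forall i k x g, Q k x -> Q (N i + k)%nat (G i x) /\ Q (N i + k)%nat (P i g x)) ->
  forall s, let h := history A f G P s in
    (forall w, In w (prev_points A h ++ map o_grad h ++ map o_prox h) -> Q (progress N s) w) /\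
    Q (progress N s) (cur A h).
Proof.
  intros HA Hmono Hspan H0 Hstep s. destruct HA as (_ & _ & _ & Hnext).
  induction s as [|i s [IHobs IHcur]]; simpl; [split; auto; intros w []|].
  set (h := history A f G P s) in *. set (x := cur A h) in *.
  set (k := (N i + progress N s)%nat).
  destruct (Hstep i (progress N s) x (gam A (S (length s))) IHcur) as [HG HP].
  assert (Hold : forall w, In w (prev_points A h ++ map o_grad h ++ map o_prox h) -> Q k w)
    by (intros; apply Hmono with (progress N s); [lia|auto]).
  assert (Hall : forall w, In w (x :: prev_points A h ++ G i x :: map o_grad h
                                  ++ P i (gam A (S (length s))) x :: map o_prox h) -> Q k w).
  { intros w Hw. simpl in Hw. repeat (rewrite in_app_iff in Hw; simpl in Hw).
    destruct Hw as [<-|[Hw|[<-|[Hw|[<-|Hw]]]]];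
      auto; [apply Hmono with (progress N s); [lia|auto]|..];
      apply Hold; rewrite !in_app_iff; auto. }
  split; auto. eapply Hspan; [apply Hnext; discriminate|]. exact Hall.
Qed.

(* Two indices of total sampling probability at most 3/n always exist; the links of the
   chain are hidden in the two corresponding components, so that the chain advances
   only at rate 3/n per oracle call. *)
Lemma exists_le_average m (F : nat -> R) c :
  (0 < m)%nat -> sumR m F <= INR m * c -> exists k, (k < m)%nat /\ F k <= c.
Proof.
  intros Hm Hs. apply NNPP; intros Hno.
  assert (INR m * c < sumR m F); [|lra].
  apply sumR_gt.
  - intros k Hk. destruct (Rle_dec (F k) c); [exfalso; apply Hno; eauto|lra].
  - exists 0%nat. split; [lia|]. destruct (Rle_dec (F 0%nat) c); [|lra].
    exfalso; apply Hno; exists 0%nat; split; auto; lia.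
Qed.

Lemma two_rare_indices n (F : nat -> R) : (2 <= n)%nat -> (forall k, 0 <= F k) -> sumR n F = 1 ->
  exists k1 k2, (k1 < n)%nat /\ (k2 < n)%nat /\ k1 <> k2 /\ F k1 + F k2 <= 3 / INR n.
Proof.
  intros Hn HF Hs. assert (Hn0 : 0 < INR n) by (apply lt_0_INR; lia).
  assert (Hn2 : 2 <= INR n) by (replace 2 with (INR 2) by (simpl; ring); apply le_INR; auto).
  destruct (exists_le_average n F (1 / INR n)) as [k1 [Hk1 Hf1]];
    [lia|rewrite Hs; right; field; lra|].
  assert (Hk2 : exists k2, (k2 < n)%nat /\ k2 <> k1 /\ F k2 <= 2 / INR n).
  { apply NNPP; intros Hno.
    set (G := fun k => F k + (if Nat.eq_dec k k1 then 2 / INR n else 0)).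
    assert (Hsum : INR n * (2 / INR n) < sumR n G).
    { apply sumR_gt.
      - intros k Hk. unfold G. destruct Nat.eq_dec; [pose proof (HF k); lra|].
        destruct (Rle_dec (F k) (2 / INR n)); [exfalso; apply Hno; eauto|lra].
      - set (k := if Nat.eq_dec k1 0 then 1%nat else 0%nat).
        assert (Hkk : (k < n /\ k <> k1)%nat) by (unfold k; destruct Nat.eq_dec; lia).
        clearbody k. destruct Hkk as [Hkn Hkk]. exists k. split; [exact Hkn|].
        unfold G. destruct Nat.eq_dec; [lia|].
        destruct (Rle_dec (F k) (2 / INR n)); [exfalso; apply Hno; eauto|lra]. }
    unfold G in Hsum. rewrite sumR_add, sumR_indicator, Hs in Hsum by auto.
    replace (INR n * (2 / INR n)) with 2 in Hsum by (field; lra).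
    assert (2 / INR n <= 1) by (apply Rmult_le_reg_r with (INR n); [lra|]; field_simplify; lra).
    lra. }
  destruct Hk2 as [k2 [Hk2 [Hne Hf2]]]. exists k1, k2. repeat split; auto.
  replace (3 / INR n) with (1 / INR n + 2 / INR n) by (field; lra). lra.
Qed.

Lemma prob_coords {n d} (A : pifo n d) : valid_pifo A ->
  (forall k, 0 <= coord (prob A) k) /\ sumR n (coord (prob A)) = 1.
Proof.
  intros (H0 & H1 & _). split; [intros k; unfold coord; destruct lt_dec; auto; lra|].
  rewrite <- sum_idx_coord. auto.
Qed.

Section Assembly.
Context {n d : nat}.
Variables (k1 k2 : nat) (cA cB cU : qparams).

Definition assign (i : idx n) : qparams :=
  if Nat.eq_dec (proj1_sig i) k1 then cA else if Nat.eq_dec (proj1_sig i) k2 then cB else cU.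

(* How far one query to component [i] may push the chain. *)
Definition step_size (i : idx n) : nat :=
  if Nat.eq_dec (proj1_sig i) k1 then 1%nat else if Nat.eq_dec (proj1_sig i) k2 then 1%nat else 0%nat.

Definition mix_value (z : vec d) : R :=
  (quad cA z + quad cB z + (INR n - 2) * quad cU z) / INR n.

Hypotheses (Hk1 : (k1 < n)%nat) (Hk2 : (k2 < n)%nat) (Hk12 : k1 <> k2).

Lemma favg_assign (x0 x : vec d) :
  favg (fun i => rquad x0 (assign i)) x = mix_value (householder x0 x).
Proof.
  unfold favg, mix_value. f_equal.
  rewrite (sum_idx_nat _ (fun j => if Nat.eq_dec j k1 then rquad x0 cA x
                                   else if Nat.eq_dec j k2 then rquad x0 cB x else rquad x0 cU x)).
  - apply sumR_three_valued; auto.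
  - intros i. unfold assign. repeat destruct Nat.eq_dec; auto.
Qed.

Lemma mean_step_size (p : idx n -> R) :
  sum_idx n (fun j => p j * INR (step_size j)) = coord p k1 + coord p k2.
Proof.
  rewrite (sum_idx_nat _ (fun j => (if Nat.eq_dec j k1 then coord p k1 else 0)
                                  + (if Nat.eq_dec j k2 then coord p k2 else 0))).
  - rewrite sumR_add, !sumR_indicator; auto.
  - intros i. rewrite <- (coord_idx p i). destruct i as [j Hj]. unfold step_size. simpl.
    repeat destruct Nat.eq_dec; subst; try lia; simpl; ring.
Qed.

Lemma expected_value_bound (A : pifo n d) L (alpha beta : R) :
  valid_pifo A -> 0 < L -> (1 <= d)%nat ->
  admissible L d cA -> admissible L d cB -> admissible L d cU ->
  q_target cU = 0 -> q_links cU = 0%nat ->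
  (forall k z, vanish_after k z -> alpha + beta * INR k <= mix_value z) ->
  let f := fun i => rquad (x_init A) (assign i) in
  let G := fun i => rquad_grad (x_init A) (assign i) in
  let P := fun i g => rquad_prox (x_init A) (assign i) g in
  (forall i, L_smooth L (f i) (G i) /\ convex (f i)) /\
  (forall i gamma x, 0 < gamma -> is_prox (f i) gamma x (P i gamma x)) /\
  (forall t, alpha + beta * INR t * (coord (prob A) k1 + coord (prob A) k2) <=
     expect (prob A) t (fun s => favg f (cur A (history A f G P s)))).
Proof.
  intros HA HL Hd HcA HcB HcU HbU HPU Hlow f G P.
  assert (Hgood : forall i, admissible L d (assign i))
    by (intros i; unfold assign; repeat destruct Nat.eq_dec; auto).
  split; [|split].
  - intros i. split; [apply rquad_smooth|eapply rquad_convex]; eauto.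
  - intros i g x Hg. apply rquad_prox_spec with L; auto.
  - intros t. set (x0 := x_init A) in *.
    set (Q := fun k v => vanish_after k (householder x0 v)).
    assert (Hstep : forall i k x g, Q k x -> Q (step_size i + k)%nat (G i x)
                                          /\ Q (step_size i + k)%nat (P i g x)).
    { intros i k x g Hx. unfold Q, G, P, rquad_grad, rquad_prox. rewrite !householder_involutive.
      unfold step_size, assign. destruct Nat.eq_dec; [|destruct Nat.eq_dec].
      - split; [apply quad_grad_vanish | apply quad_prox_vanish]; auto.
      - split; [apply quad_grad_vanish | apply quad_prox_vanish]; auto.
      - split; [apply quad_grad_idle | apply quad_prox_idle]; auto. }
    assert (Hinit : Q 0%nat x0)
      by (unfold Q, x0; rewrite householder_init by auto; apply vanish_scale, vanish_unit; lia).
    assert (Hrun : forall s, alpha + beta * INR (progress step_size s)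
                             <= favg f (cur A (history A f G P s))).
    { intros s. unfold f. rewrite favg_assign. apply Hlow.
      apply (proj2 (history_invariant A f G P Q step_size HA
        ltac:(intros; eapply vanish_mono; eauto) ltac:(intros; eapply vanish_span; eauto)
        Hinit Hstep s)). }
    destruct HA as (Hp0 & Hp1 & _).
    eapply Rle_trans; [|apply expect_mono; [apply Hp0|exact Hrun]].
    rewrite expect_affine, expect_progress, mean_step_size by auto. right; ring.
Qed.

End Assembly.

Definition hard_instance {n d} (A : pifo n d) (L B eps T : R) : Prop :=
  exists (f : idx n -> vec d -> R) (G : idx n -> vec d -> vec d)
         (P : idx n -> R -> vec d -> vec d) (xstar : vec d),
    (forall i, L_smooth L (f i) (G i) /\ convex (f i)) /\
    (forall i gamma x, 0 < gamma -> is_prox (f i) gamma x (P i gamma x)) /\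
    (forall y, favg f xstar <= favg f y) /\
    norm2 (vsub (x_init A) xstar) <= B /\
    forall t : nat, INR t <= T ->
      expect (prob A) t (fun s => favg f (cur A (history A f G P s))) - favg f xstar >= eps.

Lemma hard_instance_of_quadratics {n d} (A : pifo n d) L B eps (cA cB cU : qparams)
    (fstar gamma m : R) (zs : vec d) :
  (2 <= n)%nat -> valid_pifo A -> 0 < L ->
  admissible L d cA -> admissible L d cB -> admissible L d cU ->
  q_target cU = 0 -> q_links cU = 0%nat -> 0 < m -> 0 <= gamma ->
  (forall z, fstar <= @mix_value n d cA cB cU z) -> @mix_value n d cA cB cU zs = fstar ->
  (forall k z, INR k < m -> vanish_after k z ->
     fstar + gamma * (1 - INR k / m) <= @mix_value n d cA cB cU z) ->
  norm2 (vsub (vscale (norm2 (x_init A)) (unit_vec 0)) zs) <= B ->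
  eps <= gamma / 2 ->
  hard_instance A L B eps (INR n * m / 6).
Proof.
  intros Hn HA HL HcA HcB HcU HbU HPU Hm Hgam Hmin Hstar Hlow Hdist Heps.
  assert (Hd : (1 <= d)%nat) by (destruct HcA as (_ & _ & _ & _ & _ & _ & Hd); lia).
  assert (Hn0 : 0 < INR n) by (apply lt_0_INR; lia).
  set (x0 := x_init A) in *.
  destruct (prob_coords A HA) as [Hp0 Hp1].
  destruct (two_rare_indices n (coord (prob A)) Hn Hp0 Hp1) as (k1 & k2 & Hk1 & Hk2 & Hk12 & Hq).
  assert (Hlow_all : forall k z, vanish_after k z ->
            (fstar + gamma) + (- gamma / m) * INR k <= @mix_value n d cA cB cU z).
  { intros k z Hz. destruct (Rlt_dec (INR k) m) as [Hk|Hk].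
    - replace ((fstar + gamma) + - gamma / m * INR k) with (fstar + gamma * (1 - INR k / m))
        by (field; lra). auto.
    - apply Rle_trans with fstar; auto.
      assert (Hkm : gamma / m * m <= gamma / m * INR k)
        by (apply Rmult_le_compat_l; [apply Rdiv_nonneg|]; lra).
      replace (gamma / m * m) with gamma in Hkm by (field; lra). lra. }
  destruct (expected_value_bound k1 k2 cA cB cU Hk1 Hk2 Hk12 A L (fstar + gamma) (- gamma / m)
              HA HL Hd HcA HcB HcU HbU HPU Hlow_all) as (Hsmooth & Hprox & Hexp).
  fold x0 in Hsmooth, Hprox, Hexp.
  exists (fun i => rquad x0 (assign k1 k2 cA cB cU i)),
    (fun i => rquad_grad x0 (assign k1 k2 cA cB cU i)),
    (fun i g => rquad_prox x0 (assign k1 k2 cA cB cU i) g), (householder x0 zs).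
  assert (Hfstar : favg (fun i => rquad x0 (@assign n k1 k2 cA cB cU i)) (householder x0 zs) = fstar)
    by (rewrite favg_assign, householder_involutive; auto).
  split; [exact Hsmooth|]. split; [exact Hprox|]. split.
  { intros y. rewrite Hfstar, favg_assign; auto. }
  split.
  { unfold x0. rewrite dist_householder, householder_init; auto. }
  intros t Ht. rewrite Hfstar. specialize (Hexp t).
  set (q := coord (prob A) k1 + coord (prob A) k2) in *.
  assert (0 <= q) by (pose proof (Hp0 k1); pose proof (Hp0 k2); unfold q; lra).
  assert (0 <= INR t) by apply pos_INR.
  assert (Htq : INR t * q <= m / 2).
  { apply Rle_trans with (INR n * m / 6 * (3 / INR n)); [apply Rmult_le_compat; lra|].
    right; field; lra. }
  assert (Hloss : gamma / m * (INR t * q) <= gamma / m * (m / 2))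
    by (apply Rmult_le_compat_l; [apply Rdiv_nonneg|]; lra).
  replace (gamma / m * (m / 2)) with (gamma / 2) in Hloss by (field; lra).
  replace (fstar + gamma + - gamma / m * INR t * q) with (fstar + gamma - gamma / m * (INR t * q))
    in Hexp by (field; lra).
  lra.
Qed.

(* The minimizers used below, in rotated coordinates: [(nx, bst, ..., bst)]. *)
Definition plateau (d : nat) (nx bst : R) : vec d :=
  fun i => if Nat.eq_dec (proj1_sig i) 0 then nx else bst.

Lemma coord_plateau0 d nx bst : (1 <= d)%nat -> coord (plateau d nx bst) 0 = nx.
Proof. intros. unfold coord, plateau. destruct (lt_dec 0 d); [reflexivity|lia]. Qed.
Lemma coord_plateau d nx bst j : (1 <= j)%nat -> (j < d)%nat -> coord (plateau d nx bst) j = bst.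
Proof. intros. unfold coord, plateau. destruct (lt_dec j d); [|lia]. simpl. destruct Nat.eq_dec; auto; lia. Qed.

Lemma dist_plateau d nx bst : (1 <= d)%nat ->
  norm2 (vsub (vscale nx (unit_vec 0)) (plateau d nx bst)) = sqrt (INR (d - 1) * bst ^ 2).
Proof.
  intros Hd. unfold norm2. f_equal.
  rewrite inner_coord. replace d with (1 + (d - 1))%nat at 1 by lia. rewrite sumR_split.
  simpl sumR. rewrite coord_sub, coord_scale, coord_unit_same, coord_plateau0 by lia.
  rewrite <- sumR_const. replace ((nx * 1 - nx) * (nx * 1 - nx)) with 0 by ring.
  rewrite !Rplus_0_l. apply sumR_ext; intros.
  rewrite coord_sub, coord_scale, coord_unit_diff, coord_plateau by lia. ring.
Qed.

(* With b = B / sqrt(2P+1), the head [L/4 (b - z_1)^2 + L/4 sum (z_2 - z_3)^2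
   + ...] and the tail [L/4 sum (z_1 - z_2)^2 + ...] add up to Nesterov's chain
   [L/4 sum_(j <= 2P) (zeta_j - zeta_(j+1))^2] with zeta_0 = b. *)
Definition chain_head (L b : R) (P : nat) : qparams := mkQ (L / 2) b (L / 2) 2 P.
Definition chain_tail (L : R) (P : nat) : qparams := mkQ 0 0 (L / 2) 1 P.
Definition idle_quad : qparams := mkQ 0 0 0 1 0.

Lemma quad_idle {d} (z : vec d) : quad idle_quad z = 0.
Proof. unfold quad, idle_quad. simpl. field. Qed.

Definition chain_point {d} (b : R) (z : vec d) (j : nat) : R :=
  match j with O => b | S _ => coord z j end.

Lemma chain_sum {d} L b P (z : vec d) :
  quad (chain_head L b P) z + quad (chain_tail L P) z =
  L / 4 * sumR (2 * P + 1) (fun j => (chain_point b z j - chain_point b z (S j)) ^ 2).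
Proof.
  replace (2 * P + 1)%nat with (1 + 2 * P)%nat by lia. rewrite sumR_split.
  rewrite <- (sumR_pairs P (fun j => (chain_point b z (1 + j) - chain_point b z (S (1 + j))) ^ 2)).
  unfold quad, link, chain_head, chain_tail. cbn [q_start q_anchor q_target q_link q_links sumR].
  assert (E : forall i,
    (chain_point b z (1 + 2 * i) - chain_point b z (S (1 + 2 * i))) ^ 2
    + (chain_point b z (1 + (2 * i + 1)) - chain_point b z (S (1 + (2 * i + 1)))) ^ 2
    = (coord z (1 + 2 * i) - coord z (1 + 2 * i + 1)) ^ 2
      + (coord z (2 + 2 * i) - coord z (2 + 2 * i + 1)) ^ 2).
  { intros i. replace (1 + 2 * i)%nat with (S (2 * i)) by lia.
    replace (1 + (2 * i + 1))%nat with (S (S (2 * i))) by lia.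
    replace (S (2 * i) + 1)%nat with (S (S (2 * i))) by lia.
    replace (2 + 2 * i)%nat with (S (S (2 * i))) by lia.
    replace (S (S (2 * i)) + 1)%nat with (S (S (S (2 * i)))) by lia. reflexivity. }
  rewrite (sumR_ext _ _ _ (fun i _ => E i)), sumR_add. simpl chain_point. field.
Qed.

(* A point vanishing after coordinate [k < 2P+1] leaves at most [2P+1] links to bridge
   the gap b between zeta_0 and zeta_(k+1) = 0. *)
Lemma chain_lower {d} L b P k (z : vec d) : 0 <= L -> vanish_after k z -> (k < 2 * P + 1)%nat ->
  L / 4 * (b ^ 2 / INR (2 * P + 1)) <= quad (chain_head L b P) z + quad (chain_tail L P) z.
Proof.
  intros HL Hz Hk. rewrite chain_sum. apply Rmult_le_compat_l; [lra|].
  assert (HSk : 0 < INR (S k) <= INR (2 * P + 1)) by (split; [apply lt_0_INR|apply le_INR]; lia).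
  apply Rle_trans with (b ^ 2 / INR (S k)).
  { apply Rmult_le_compat_l; [apply pow2_ge_0|]. apply Rinv_le_contravar; lra. }
  apply Rle_trans with (sumR (S k) (fun j => (chain_point b z j - chain_point b z (S j)) ^ 2)).
  - pose proof (sumR_increments_sq (chain_point b z) (S k) ltac:(lia)) as T.
    simpl chain_point at 1 in T. unfold chain_point at 1 in T.
    rewrite (Hz (S k)), Rminus_0_r in T by lia. exact T.
  - apply sumR_le_length; [lia|intros; apply pow2_ge_0].
Qed.

Lemma chain_instance {n} L B eps P (A : pifo n (2 * P + 2)) :
  (2 <= n)%nat -> valid_pifo A -> 0 < L -> 0 < B ->
  eps <= L * B ^ 2 / (8 * INR n * INR (2 * P + 1) ^ 2) ->
  hard_instance A L B eps (INR n * INR (2 * P + 1) / 6).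
Proof.
  intros Hn HA HL HB Heps. set (d := (2 * P + 2)%nat).
  set (m := INR (2 * P + 1)) in *. assert (Hm : 0 < m) by (apply lt_0_INR; lia).
  assert (Hn0 : 0 < INR n) by (apply lt_0_INR; lia).
  set (b := B / sqrt m).
  assert (Hb2 : b ^ 2 = B ^ 2 / m)
    by (unfold b, Rdiv; rewrite Rpow_mult_distr, pow_inv, pow2_sqrt by lra; auto).
  set (cA := chain_head L b P). set (cB := chain_tail L P).
  set (gamma := L / 4 * (b ^ 2 / m) / INR n).
  assert (Hgam : 0 <= gamma)
    by (unfold gamma; apply Rdiv_nonneg; [apply Rmult_le_pos; [|apply Rdiv_nonneg]|]; try lra;
        apply pow2_ge_0).
  assert (Hmix : forall z : vec d, @mix_value n d cA cB idle_quad z = (quad cA z + quad cB z) / INR n).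
  { intros z. unfold mix_value. rewrite quad_idle, Rmult_0_r, Rplus_0_r. auto. }
  apply (hard_instance_of_quadratics A L B eps cA cB idle_quad 0 gamma m
           (plateau d (norm2 (x_init A)) b)); auto;
    try (unfold admissible, cA, cB, idle_quad, chain_head, chain_tail, d; simpl;
         repeat split; lra || lia || (right; lia) || (left; lra)).
  - intros z. rewrite Hmix. apply Rdiv_nonneg; auto.
    apply Rplus_le_le_0_compat; apply quad_nonneg; unfold cA, cB; simpl; lra.
  - rewrite Hmix. unfold quad, link, cA, cB, chain_head, chain_tail.
    cbn [q_start q_anchor q_target q_link q_links].
    rewrite coord_plateau, !sumR_zero by (unfold d; lia || (intros; rewrite !coord_plateau by lia; ring)).
    unfold Rdiv; ring.
  - intros k z Hk Hz. rewrite Rplus_0_l, Hmix.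
    assert (0 <= gamma * (INR k / m)) by (apply Rmult_le_pos; [|apply Rdiv_nonneg; [apply pos_INR|]]; lra).
    apply Rle_trans with gamma; [lra|]. unfold gamma, Rdiv at 2.
    apply Rmult_le_compat_r; [apply Rlt_le, Rinv_0_lt_compat; lra|].
    apply (chain_lower L b P k); [lra|auto|apply INR_lt; auto].
  - rewrite dist_plateau by lia. replace (d - 1)%nat with (2 * P + 1)%nat by lia. fold m.
    rewrite Hb2. replace (m * (B ^ 2 / m)) with (B ^ 2) by (field; lra). rewrite sqrt_pow2; lra.
  - unfold gamma. rewrite Hb2.
    replace (L / 4 * (B ^ 2 / m / m) / INR n / 2) with (L * B ^ 2 / (8 * INR n * m ^ 2)) by (field; lra).
    auto.
Qed.

(* Short-horizon regime, in dimension 2: component k1 pulls coordinate 1 towards nB and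
   all others towards 0, so the mean is L/2 ((z_1 - B)^2 + (n-1) B^2), and nothing is
   learnt about the minimizer before component k1 (or k2) is queried. *)
Definition spike (L target : R) : qparams := mkQ L target 0 2 0.

Lemma spike_mix {n} L B (z : vec 2) : (2 <= n)%nat ->
  @mix_value n 2 (spike L (INR n * B)) (spike L 0) (spike L 0) z
  = L / 2 * ((coord z 1 - B) ^ 2 + (INR n - 1) * B ^ 2).
Proof.
  intros Hn. assert (0 < INR n) by (apply lt_0_INR; lia).
  unfold mix_value, quad, spike. cbn [q_anchor q_target q_link q_links sumR]. field. lra.
Qed.

Lemma short_instance {n} L B eps (A : pifo n 2) :
  (2 <= n)%nat -> valid_pifo A -> 0 < L -> 0 < B -> eps <= L * B ^ 2 / 4 ->
  hard_instance A L B eps (INR n / 6).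
Proof.
  intros Hn HA HL HB Heps.
  set (fstar := L / 2 * ((INR n - 1) * B ^ 2)).
  assert (HLB : 0 <= L * B ^ 2) by (apply Rmult_le_pos; [lra|apply pow2_ge_0]).
  replace (INR n / 6) with (INR n * 1 / 6) by field.
  apply (hard_instance_of_quadratics A L B eps (spike L (INR n * B)) (spike L 0) (spike L 0)
           fstar (L * B ^ 2 / 2) 1 (plateau 2 (norm2 (x_init A)) B)); auto;
    try (unfold admissible, spike; simpl; repeat split; lra || lia || (right; lia)).
  - intros z. rewrite spike_mix by auto. unfold fstar.
    pose proof (pow2_ge_0 (coord z 1 - B)). nra.
  - rewrite spike_mix, coord_plateau by (auto || lia). unfold fstar. ring.
  - intros k z Hk Hz. assert (k = 0%nat) by (change 1 with (INR 1) in Hk; apply INR_lt in Hk; lia). subst k.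
    rewrite spike_mix, (Hz 1%nat) by (auto || lia). unfold fstar. simpl. right; field.
  - rewrite dist_plateau by lia. simpl INR. rewrite Rmult_1_l, sqrt_pow2; lra.
Qed.

Lemma hard_instance_shorter {n d} (A : pifo n d) L B eps T T' :
  T' <= T -> hard_instance A L B eps T -> hard_instance A L B eps T'.
Proof.
  intros HT (f & G & P & xs & H1 & H2 & H3 & H4 & H5).
  exists f, G, P, xs. do 4 (split; [assumption|]). intros t Ht. apply H5. lra.
Qed.

(* The natural chain length r = sqrt (L B^2 / (8 n eps)) controls both the dimension
   B sqrt (L/(n eps)) and the iteration count B sqrt (n L/eps) of the theorem. *)
Section Scales.
Variables (n : nat) (L B eps : R).
Hypotheses (Hn : (0 < n)%nat) (HL : 0 < L) (HB : 0 < B) (He : 0 < eps).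

Definition chain_scale : R := sqrt (L * B ^ 2 / (8 * INR n * eps)).

Let Hn0 : 0 < INR n.
Proof. apply lt_0_INR; lia. Qed.

Lemma chain_scale_sq : chain_scale ^ 2 = L * B ^ 2 / (8 * INR n * eps).
Proof.
  unfold chain_scale. rewrite pow2_sqrt; auto.
  apply Rdiv_nonneg; [apply Rmult_le_pos; [lra|apply pow2_ge_0]|]. nra.
Qed.

Lemma chain_scale_nonneg : 0 <= chain_scale.
Proof. apply sqrt_pos. Qed.

Lemma iterations_le_scale : B * sqrt (INR n * L / eps) <= 3 * INR n * chain_scale.
Proof.
  pose proof chain_scale_nonneg. apply Rsqr_incr_0_var; [|nra]. unfold Rsqr.
  replace (B * sqrt (INR n * L / eps) * (B * sqrt (INR n * L / eps)))
    with (B ^ 2 * (sqrt (INR n * L / eps) * sqrt (INR n * L / eps))) by ring.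
  replace (3 * INR n * chain_scale * (3 * INR n * chain_scale))
    with (9 * INR n ^ 2 * chain_scale ^ 2) by ring.
  rewrite sqrt_sqrt, chain_scale_sq by (apply Rdiv_nonneg; nra).
  assert (0 <= B ^ 2 * (INR n * L / eps)) by (apply Rmult_le_pos; [apply pow2_ge_0|apply Rdiv_nonneg; nra]).
  replace (9 * INR n ^ 2 * (L * B ^ 2 / (8 * INR n * eps))) with (9 / 8 * (B ^ 2 * (INR n * L / eps)))
    by (field; lra).
  lra.
Qed.

Lemma scale_le_dimension : chain_scale <= B * sqrt (L / (INR n * eps)).
Proof.
  assert (0 <= B * sqrt (L / (INR n * eps))) by (apply Rmult_le_pos; [lra|apply sqrt_pos]).
  apply Rsqr_incr_0_var; auto. unfold Rsqr.
  replace (B * sqrt (L / (INR n * eps)) * (B * sqrt (L / (INR n * eps))))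
    with (B ^ 2 * (sqrt (L / (INR n * eps)) * sqrt (L / (INR n * eps)))) by ring.
  replace (chain_scale * chain_scale) with (chain_scale ^ 2) by ring.
  rewrite sqrt_sqrt, chain_scale_sq by (apply Rdiv_nonneg; nra).
  assert (0 <= B ^ 2 * (L / (INR n * eps))) by (apply Rmult_le_pos; [apply pow2_ge_0|apply Rdiv_nonneg; nra]).
  replace (L * B ^ 2 / (8 * INR n * eps)) with (1 / 8 * (B ^ 2 * (L / (INR n * eps)))) by (field; lra).
  lra.
Qed.

Lemma accuracy_of_chain_length m : 0 < m <= chain_scale -> eps <= L * B ^ 2 / (8 * INR n * m ^ 2).
Proof.
  intros Hm. assert (Hm2 : m ^ 2 <= L * B ^ 2 / (8 * INR n * eps))
    by (rewrite <- chain_scale_sq; apply pow_incr; lra).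
  assert (0 < 8 * INR n * m ^ 2) by (apply Rmult_lt_0_compat; [lra|apply pow_lt; lra]).
  apply Rmult_le_reg_r with (8 * INR n * m ^ 2); auto.
  replace (L * B ^ 2 / (8 * INR n * m ^ 2) * (8 * INR n * m ^ 2)) with (L * B ^ 2) by (field; lra).
  apply Rmult_le_compat_r with (r := 8 * INR n * eps) in Hm2; [|nra].
  replace (L * B ^ 2 / (8 * INR n * eps) * (8 * INR n * eps)) with (L * B ^ 2) in Hm2 by (field; lra).
  lra.
Qed.

End Scales.

Lemma odd_length_near r : 3 <= r -> exists N : nat, r / 3 <= INR (2 * N + 1) <= r.
Proof.
  intros Hr. destruct (archimed ((r - 1) / 2)) as [H1 H2].
  assert (Hz : (0 < up ((r - 1) / 2))%Z) by (apply lt_0_IZR; lra).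
  exists (Z.to_nat (up ((r - 1) / 2) - 1)).
  assert (HN : INR (Z.to_nat (up ((r - 1) / 2) - 1)) = IZR (up ((r - 1) / 2)) - 1)
    by (rewrite INR_IZR_INZ, Z2Nat.id, minus_IZR by lia; auto).
  rewrite plus_INR, mult_INR, HN. simpl. lra.
Qed.

Theorem theorem3p2 :
  exists c C : R, 0 < c /\ 0 < C /\
  forall (n : nat) (L B eps : R),
    (2 <= n)%nat -> 0 < L -> 0 < B -> 0 < eps -> eps <= L * B ^ 2 / 4 ->
    forall A : forall d : nat, pifo n d,
      (forall d, valid_pifo (A d)) ->
      exists (d : nat) (f : idx n -> vec d -> R) (G : idx n -> vec d -> vec d)
             (P : idx n -> R -> vec d -> vec d) (xstar : vec d),
        INR d <= C * (1 + B * sqrt (L / (INR n * eps))) /\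
        (forall i, L_smooth L (f i) (G i) /\ convex (f i)) /\
        (forall i gamma x, 0 < gamma -> is_prox (f i) gamma x (P i gamma x)) /\
        (forall y, favg f xstar <= favg f y) /\
        norm2 (vsub (x_init (A d)) xstar) <= B /\
        forall t : nat,
          INR t <= c * (INR n + B * sqrt (INR n * L / eps)) ->
          expect (prob (A d)) t
            (fun s => favg f (cur (A d) (history (A d) f G P s)))
          - favg f xstar >= eps.
Proof.
  exists (1 / 72), 2. split; [lra|]. split; [lra|].
  intros n L B eps Hn HL HB He Heps A HA.
  assert (Hn0 : 0 < INR n) by (apply lt_0_INR; lia).
  pose proof (chain_scale_nonneg n L B eps) as Hr0.
  assert (HS : B * sqrt (INR n * L / eps) <= 3 * INR n * chain_scale n L B eps)
    by (apply iterations_le_scale; auto; lia).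
  assert (HD : chain_scale n L B eps <= B * sqrt (L / (INR n * eps)))
    by (apply scale_le_dimension; auto; lia).
  set (r := chain_scale n L B eps) in *.
  set (S := B * sqrt (INR n * L / eps)) in *. set (D := B * sqrt (L / (INR n * eps))) in *.
  destruct (Rle_dec 3 r) as [Hr|Hr].
  - (* long horizon: a chain of odd length m with r/3 <= m <= r, in dimension m + 1 *)
    destruct (odd_length_near r Hr) as [N [Hm1 Hm2]].
    set (m := INR (2 * N + 1)) in *.
    assert (Hacc : eps <= L * B ^ 2 / (8 * INR n * m ^ 2))
      by (apply accuracy_of_chain_length; auto; [lia|fold r; lra]).
    pose proof (chain_instance L B eps N (A (2 * N + 2)%nat) Hn (HA _) HL HB Hacc) as Hhard.
    assert (INR n * r <= INR n * (3 * m)) by (apply Rmult_le_compat_l; lra).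
    assert (INR n * 3 <= INR n * r) by (apply Rmult_le_compat_l; lra).
    apply (hard_instance_shorter _ _ _ _ _ (1 / 72 * (INR n + S))) in Hhard; [|fold m; lra].
    destruct Hhard as (f & G & P & xs & Hprops). exists (2 * N + 2)%nat, f, G, P, xs.
    split; [|exact Hprops].
    replace (INR (2 * N + 2)) with (m + 1) by (unfold m; rewrite !plus_INR; simpl; ring). lra.
  -
    pose proof (short_instance L B eps (A 2%nat) Hn (HA _) HL HB Heps) as Hhard.
    assert (INR n * r <= INR n * 3) by (apply Rmult_le_compat_l; lra).
    apply (hard_instance_shorter _ _ _ _ _ (1 / 72 * (INR n + S))) in Hhard; [|lra].
    destruct Hhard as (f & G & P & xs & Hprops). exists 2%nat, f, G, P, xs.
    split; [simpl; lra|exact Hprops].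
Qed.
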